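(* Consider the single-block on-chain auction game described in the context (with reserve price $r=0$), and suppose bidders $1,\dots,n$ bid truthfully and use a common tipping function $t:[0,1]\to\mathbb{R}_+$ satisfying $t(v)\le v/n$ for all $v\in[0,1]$. Then a best response for bidder 0, as a function of his value $v_0$ and the observed vector of tips $(t_1,\dots,t_n)$, is: bribe, i.e. offer the proposer $\sum_{i=1}^n t_i$ in exchange for excluding all of bidder $1$ through $n$'s bids, if $\sum_{i=1}^n t_i\le v_0$; and do not bribe if $\sum_{i=1}^n t_i>v_0$.
   Context: Single-block on-chain auction game. A seller has one indivisible good; there are $n+1$ buyers $N=\{0,1,\dots,n\}$ with quasilinear utilities and independent private values $v_i\in[0,1]$ ($v_0\sim F_0$, $v_1,\dots,v_n$ i.i.d. $\sim F$), common knowledge of $n,F,F_0$. The seller runs a sealed-bid second-price auction with reserve $r$ in a single block built by a single profit-maximizing proposer. Buyers $1,\dots,n$ simultaneously submit a private bid $b_i$ and a public tip $t_i\ge0$. Buyer 0 then observes the tips and $v_0$, may make the proposer a take-it-or-leave-it offer of a subset $S\subseteq\{1,\dots,n\}$ and a payment $p$ to exclude the bids in $S$, and submits his own bid $b_0$. The proposer accepts iff $p\ge\sum_{i\in S}t_i$, in which case he includes exactly the bids of $N\setminus S$ and receives $p$; otherwise he includes all bids. The second-price auction is computed on the included bids (highest included bid wins if at least $r$, paying the maximum of $r$ and the other included bids). A bidder pays his tip iff his bid is included. *)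

From HB Require Import structures.
From mathcomp Require Import all_boot all_order all_algebra.
From mathcomp Require Import reals.
Set Implicit Arguments. Unset Strict Implicit. Unset Printing Implicit Defensive.
Import Order.TTheory GRing.Theory Num.Theory.
Local Open Scope ring_scope.

(* Bidders 1..n are indexed by 'I_n; bidder 0 is treated separately.      *)
(* An action of bidder 0: an optional take-it-or-leave-it offer (S, p) to *)
(* the proposer (exclude the bids in S for a payment p), and his bid b0.  *)
Record action (R : realType) (n : nat) := Action {
  offer : option ({set 'I_n} * R);
  bid0 : R }.

Definition valid_action (R : realType) (n : nat) (a : action R n) : bool :=
  if offer a is Some (_, p) then 0 <= p else true.

Definition accepted (R : realType) (n : nat) (tips : 'I_n -> R)
  (S : {set 'I_n}) (p : R) : bool := \sum_(i in S) tips i <= p.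

Definition included (R : realType) (n : nat) (tips : 'I_n -> R)
  (a : action R n) : {set 'I_n} :=
  match offer a with
  | Some (X, p) => if accepted tips X p then ~: X else setT
  | None => setT
  end.

Definition bribe_paid (R : realType) (n : nat) (tips : 'I_n -> R)
  (a : action R n) : R :=
  match offer a with
  | Some (X, p) => if accepted tips X p then p else 0
  | None => 0
  end.

Definition wins0 (R : realType) (n : nat) (r : R) (tie0 : bool)
  (b : 'I_n -> R) (I : {set 'I_n}) (b0 : R) : bool :=
  (r <= b0) && [forall i in I, (b i < b0) || (tie0 && (b i == b0))].

Definition price0 (R : realType) (n : nat) (r : R) (b : 'I_n -> R)
  (I : {set 'I_n}) : R := \big[Num.max/r]_(i in I) b i.

(* tip.                                                                   *)
Definition utility0 (R : realType) (n : nat) (r : R) (tie0 : bool) (v0 : R)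
  (b tips : 'I_n -> R) (a : action R n) : R :=
  let I := included tips a in
  (if wins0 r tie0 b I (bid0 a) then v0 - price0 r b I else 0)
  - bribe_paid tips a.

Definition bribe_strategy (R : realType) (n : nat) (tips : 'I_n -> R)
  (v0 : R) : action R n :=
  if \sum_i tips i <= v0 then Action (Some (setT, \sum_i tips i)) v0
  else Action None v0.

From HB Require Import structures.
From mathcomp Require Import all_boot all_order all_algebra.
From mathcomp Require Import reals.
Set Implicit Arguments. Unset Strict Implicit. Unset Printing Implicit Defensive.
Import Order.TTheory GRing.Theory Num.Theory.
Local Open Scope ring_scope.

(* Write [T] for the total tip.  Bribing costs [T], after which bidder 0
   wins alone at price 0, so the bribe strategy earns [max 0 (v0 - T)].
   Since each tip is at most [1/n] of its bid, the tips of any set of bidders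
   add up to at most the second price that set imposes.  Hence excluding [X]
   costs at least the tips of [X], and winning against the others costs at
   least their tips: no bribe yields more than [v0 - T].  Without an accepted
   bribe the price is at least [T], so bidder 0 again earns at most
   [max 0 (v0 - T)]. *)

Section SecondPriceAuction.

Variables (R : realType) (n : nat) (r : R) (tie0 : bool) (v0 : R).
Variable b : 'I_n -> R.

Definition auction_payoff (I : {set 'I_n}) (b0 : R) : R :=
  if wins0 r tie0 b I b0 then v0 - price0 r b I else 0.

Lemma utility0E (tips : 'I_n -> R) (a : action R n) :
  utility0 r tie0 v0 b tips a
  = auction_payoff (included tips a) (bid0 a) - bribe_paid tips a.
Proof. by []. Qed.

Lemma price0_ge_reserve (I : {set 'I_n}) : r <= price0 r b I.
Proof. exact: bigmax_ge_id. Qed.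

Lemma price0_ge_bid (I : {set 'I_n}) (i : 'I_n) : i \in I -> b i <= price0 r b I.
Proof. exact: le_bigmax_cond. Qed.

Lemma price0_set0 : price0 r b set0 = r.
Proof. by rewrite /price0 big_set0. Qed.

Lemma wins0_set0 (b0 : R) : wins0 r tie0 b set0 b0 = (r <= b0).
Proof.
by rewrite /wins0 andb_idr // => _; apply/forall_inP => i; rewrite in_set0.
Qed.

Lemma wins0_price0_le (I : {set 'I_n}) (b0 : R) :
  wins0 r tie0 b I b0 -> price0 r b I <= b0.
Proof.
case/andP=> rb0 /forall_inP beaten; apply: bigmax_le => // i /beaten.
by case/orP=> [/ltW // | /andP[_ /eqP ->]].
Qed.

Lemma loses0_price0_ge (I : {set 'I_n}) (b0 : R) :
  r <= b0 -> ~~ wins0 r tie0 b I b0 -> b0 <= price0 r b I.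
Proof.
move=> rb0; rewrite /wins0 rb0 /= => /forall_inPn[i iI].
rewrite negb_or -leNgt => /andP[b0_le_bi _].
by apply: le_trans b0_le_bi _; apply: price0_ge_bid.
Qed.

Lemma auction_payoff_le_max (I : {set 'I_n}) (b0 : R) :
  auction_payoff I b0 <= Num.max 0 (v0 - price0 r b I).
Proof. by rewrite /auction_payoff; case: ifP => _; rewrite le_max lexx ?orbT. Qed.

Lemma auction_payoff_truthful (I : {set 'I_n}) :
  r <= v0 -> auction_payoff I v0 = Num.max 0 (v0 - price0 r b I).
Proof.
move=> rv0; rewrite /auction_payoff; case: ifPn => [/wins0_price0_le | lost].
  by rewrite -subr_ge0 => /max_r.
by rewrite max_l // subr_le0 loses0_price0_ge.
Qed.

Lemma sum_le_price0 (tips : 'I_n -> R) (Y : {set 'I_n}) : 0 <= r ->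
  (forall i, tips i <= b i / n%:R) -> \sum_(i in Y) tips i <= price0 r b Y.
Proof.
move=> r_ge0 tips_bound; set P := price0 r b Y.
have P_ge0 : 0 <= P := le_trans r_ge0 (price0_ge_reserve Y).
have share_ge0 : 0 <= P / n%:R by rewrite divr_ge0.
have tip_le_share i : i \in Y -> tips i <= P / n%:R.
  move=> iY; apply: le_trans (tips_bound i) _.
  by rewrite ler_wpM2r ?invr_ge0 // price0_ge_bid.
apply: le_trans (ler_sum _ tip_le_share) _; rewrite sumr_const.
apply: (le_trans (y := P / n%:R *+ n)).
  apply: (ler_wpMn2l share_ge0).
  by rewrite -[leqRHS]card_ord subset_leq_card // subset_predT.
have [-> | n_gt0] := posnP n; first by rewrite mulr0n.
by rewrite -mulr_natr divfK // pnatr_eq0 -lt0n.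
Qed.

End SecondPriceAuction.

Section BribeGame.

Variables (R : realType) (n : nat) (tie0 : bool) (v0 : R).
Variables (b tips : 'I_n -> R).

Lemma utility0_le_bribe_surplus (r : R) (a : action R n) :
  valid_action a ->
  (forall Y : {set 'I_n}, \sum_(i in Y) tips i <= price0 r b Y) ->
  utility0 r tie0 v0 b tips a <= Num.max 0 (v0 - \sum_i tips i).
Proof.
move=> valid_a tips_le_price.
have total_tips (X : {set 'I_n}) :
    \sum_i tips i = \sum_(i in X) tips i + \sum_(i in ~: X) tips i.
  by rewrite (bigID (mem X)) /=; congr (_ + _); apply: eq_bigl => i; rewrite inE.
have full_auction b0 : auction_payoff r tie0 v0 b setT b0 - 0
                        <= Num.max 0 (v0 - \sum_i tips i).
  rewrite subr0 (le_trans (auction_payoff_le_max r tie0 v0 b setT b0)) //.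
  by rewrite le_max2 // lerB // -(eq_bigl _ _ (@in_setT _)).
rewrite utility0E.
case: a valid_a => [[[X p]|] b0]; last by move=> _; apply: full_auction.
rewrite /valid_action /included /bribe_paid /= => p_ge0.
case: ifP => [paid | _]; last exact: full_auction.
rewrite lerBlDr (le_trans (auction_payoff_le_max r tie0 v0 b (~: X) b0)) //.
rewrite ge_max.
rewrite addr_ge0 ?le_max ?lexx //= -lerBlDr le_max; apply/orP; right.
rewrite -addrA lerD2l -opprD lerN2 (total_tips X) [leLHS]addrC.
exact: lerD (tips_le_price _) paid.
Qed.

Lemma utility0_bribe_strategy :
  0 <= v0 -> (forall Y : {set 'I_n}, \sum_(i in Y) tips i <= price0 0 b Y) ->
  utility0 0 tie0 v0 b tips (bribe_strategy tips v0)
  = Num.max 0 (v0 - \sum_i tips i).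
Proof.
move=> v0_ge0 tips_le_price; rewrite utility0E /bribe_strategy.
case: ifPn => [tips_le_v0 | tips_gt_v0]; rewrite /included /bribe_paid /=.
  have paid : accepted tips [set: 'I_n] (\sum_i tips i).
    by rewrite /accepted (eq_bigl _ _ (@in_setT _)).
  rewrite paid setCT /auction_payoff wins0_set0 v0_ge0 price0_set0 subr0.
  by apply/esym/max_r; rewrite subr_ge0.
have v0_lt_tips : v0 < \sum_i tips i by rewrite ltNge.
have v0_lt_price : v0 < price0 0 b setT.
  by rewrite (lt_le_trans v0_lt_tips) // -(eq_bigl _ _ (@in_setT _)).
by rewrite subr0 auction_payoff_truthful // !max_l // subr_le0 ltW.
Qed.

End BribeGame.

Theorem lemma1 (R : realType) (n : nat) (t : R -> R)
  (ht : forall v : R, 0 <= v <= 1 -> 0 <= t v <= v / n%:R)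
  (tie0 : bool) (v0 : R) (hv0 : 0 <= v0 <= 1)
  (v : 'I_n -> R) (hv : forall i, 0 <= v i <= 1)
  (a : action R n) (ha : valid_action a) :
  utility0 0 tie0 v0 v (fun i => t (v i)) a
    <= utility0 0 tie0 v0 v (fun i => t (v i))
         (bribe_strategy (fun i => t (v i)) v0).
Proof.
have tips_le_price (Y : {set 'I_n}) : \sum_(i in Y) t (v i) <= price0 0 v Y.
  by apply: sum_le_price0 => // i; case/andP: (ht _ (hv i)).
case/andP: hv0 => v0_ge0 _.
rewrite utility0_bribe_strategy //.
exact: utility0_le_bribe_surplus.
Qed.
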